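(* Assume (A7) and (A8) of the context. Then for every $\delta\in\mathbb{R}^D$ with $\|\delta\|\le\|\theta^*\|$, with probability $1-\delta_{n_q}$, $$\Lambda_{\min}\big[\nabla^2_{\theta_S}\ell(\theta^*+\delta)\big]\ge\frac{D_{\min,2}}{C_{\mathrm{ratio}}^2},$$ where $\nabla^2_{\theta_S}\ell$ is the submatrix of the Hessian of $\ell$ with rows and columns indexed by the blocks in $S$.
   Context: Let $E=\{(u,v):1\le v\le u\le m\}$, $D=b|E|$, $\psi:\mathbb{R}^2\to\mathbb{R}^b$, and $f:\mathbb{R}^m\to\mathbb{R}^D$ the concatenation of the blocks $f_t(x)=\psi(x_u,x_v)$, $t=(u,v)\in E$; $f_S$ is the subvector of blocks in $S$. $P,Q$ distributions on $\mathbb{R}^m$ with densities $p,q$; samples $x_p^{(1..n_p)}$ i.i.d. $P$, $x_q^{(1..n_q)}$ i.i.d. $Q$. $r(x;\theta)=\exp(\theta^\top f(x))/N(\theta)$, $N(\theta)=\mathbb{E}_Q[\exp(\theta^\top f(x))]$; $\hat N(\theta)=\frac1{n_q}\sum_i\exp(\theta^\top f(x_q^{(i)}))$; $\hat r(x;\theta)=\exp(\theta^\top f(x))/\hat N(\theta)$; $\ell(\theta)=-\frac1{n_p}\sum_i\theta^\top f(x_p^{(i)})+\log\hat N(\theta)$. $\theta^*$ is the true parameter ($p=q\,r(\cdot;\theta^* )$), $S=\{t:\theta^*_t\ne0\}$. $\|\cdot\|$: Euclidean/spectral norm; $\Lambda_{\min}$ smallest eigenvalue. (A7) For all $\delta$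 with $\|\delta\|\le\|\theta^*\|$ and all $x$: $0<C_{\min}\le r(x;\theta^*+\delta)\le C_{\max}<\infty$; moreover $\frac1{C_{\mathrm{ratio}}}\le\hat r(x;\theta^*+\delta)\le C_{\mathrm{ratio}}$ and $\|f_t(x)\|\le C_{f_t,\max}$ for constants. (A8) With probability 1: $\max_{t\in E}\frac1{n_q}\sum_i\|f_t(x_q^{(i)})\|\le D_{\max,1}<\infty$, $\|\frac1{n_q}\sum_if(x_q^{(i)})f(x_q^{(i)})^\top\|\le D_{\max,2}$ and $\|\widehat{\mathrm{Cov}}_q[f]\|\le D_{\max,2}<\infty$; with probability $1-\delta_{n_q}$, $\Lambda_{\min}(\widehat{\mathrm{Cov}}_q[f_S])\ge D_{\min,2}>0$; $\widehat{\mathrm{Cov}}_q$ is the sample covariance over the $Q$-sample. *)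

From HB Require Import structures.
From mathcomp Require Import all_boot all_order all_algebra.
From mathcomp Require Import all_classical all_reals all_analysis.
Set Implicit Arguments. Unset Strict Implicit. Unset Printing Implicit Defensive.
Import Order.TTheory GRing.Theory Num.Theory.
Import numFieldNormedType.Exports.
Local Open Scope classical_set_scope.
Local Open Scope ring_scope.

Definition edge (m : nat) := {p : 'I_m * 'I_m | (p.2 <= p.1)%N}.
Definition nE (m : nat) : nat := #|{: edge m}|.
Definition edge_of (m : nat) (t : 'I_(nE m)) : edge m := enum_val t.

(* Parameters theta in R^D, D = b |E|, stored as an |E| x b matrix:
   row t = block theta_t. *)
Definition par (R : realType) (m b : nat) := 'M[R]_(nE m, b).

Definition feat (R : realType) (m b : nat) (psi : R -> R -> 'rV[R]_b)
  (x : m.-tuple R) : par R m b :=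
  \matrix_(t, c) psi (tnth x (val (edge_of t)).1) (tnth x (val (edge_of t)).2) 0 c.

Definition dotp (R : realType) (p q : nat) (A B : 'M[R]_(p, q)) : R :=
  \sum_(t < p) \sum_(c < q) A t c * B t c.
Definition enorm (R : realType) (p q : nat) (A : 'M[R]_(p, q)) : R :=
  Num.sqrt (dotp A A).

Definition Npop (R : realType) (m b : nat) (psi : R -> R -> 'rV[R]_b)
  (Q : probability (m.-tuple R) R) (th : par R m b) : R :=
  fine (\int[Q]_x (expR (dotp th (feat psi x)))%:E)%E.
Definition rpop (R : realType) (m b : nat) (psi : R -> R -> 'rV[R]_b)
  (Q : probability (m.-tuple R) R) (th : par R m b) (x : m.-tuple R) : R :=
  expR (dotp th (feat psi x)) / Npop psi Q th.

Definition Nhat (R : realType) (m b nq : nat) (psi : R -> R -> 'rV[R]_b)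
  (xs : 'I_nq -> m.-tuple R) (th : par R m b) : R :=
  (\sum_(i < nq) expR (dotp th (feat psi (xs i)))) / nq%:R.
Definition rhat (R : realType) (m b nq : nat) (psi : R -> R -> 'rV[R]_b)
  (xs : 'I_nq -> m.-tuple R) (th : par R m b) (x : m.-tuple R) : R :=
  expR (dotp th (feat psi x)) / Nhat psi xs th.

Definition loss (R : realType) (m b np nq : nat) (psi : R -> R -> 'rV[R]_b)
  (xps : 'I_np -> m.-tuple R) (xqs : 'I_nq -> m.-tuple R) (th : par R m b) : R :=
  - ((\sum_(i < np) dotp th (feat psi (xps i))) / np%:R) + ln (Nhat psi xqs th).

Definition supp (R : realType) (p q : nat) (th : 'M[R]_(p, q)) : {set 'I_p} :=
  [set t | row t th != 0].

Definition Sidx (p q : nat) (S : {set 'I_p}) := {tc : 'I_p * 'I_q | tc.1 \in S}.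

Definition hessian (R : realType) (p q : nat) (g : 'M[R]_(p, q) -> R)
  (th : 'M[R]_(p, q)) (i j : 'I_p * 'I_q) : R :=
  'D_(delta_mx j.1 j.2) ('D_(delta_mx i.1 i.2) g) th.

Definition mxOf (R : realType) (I : finType) (M : I -> I -> R) : 'M[R]_#|I| :=
  \matrix_(i, j) M (enum_val i) (enum_val j).

Definition lambda_min (R : realType) (n : nat) (A : 'M[R]_n) : R :=
  inf [set a : R | eigenvalue A a].
Definition lambda_max (R : realType) (n : nat) (A : 'M[R]_n) : R :=
  sup [set a : R | eigenvalue A a].
Definition specnorm (R : realType) (n : nat) (A : 'M[R]_n) : R :=
  Num.sqrt (lambda_max (A^T *m A)).

Definition smean (R : realType) (I : finType) (n : nat) (g : 'I_n -> I -> R)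
  (i : I) : R := (\sum_(k < n) g k i) / n%:R.
Definition scov (R : realType) (I : finType) (n : nat) (g : 'I_n -> I -> R)
  (i j : I) : R :=
  (\sum_(k < n) (g k i - smean g i) * (g k j - smean g j)) / n%:R.
Definition smom2 (R : realType) (I : finType) (n : nat) (g : 'I_n -> I -> R)
  (i j : I) : R := (\sum_(k < n) g k i * g k j) / n%:R.

Definition fvec (R : realType) (m b : nat) (psi : R -> R -> 'rV[R]_b)
  (x : m.-tuple R) (i : 'I_(nE m) * 'I_b) : R := feat psi x i.1 i.2.
Definition fvecS (R : realType) (m b : nat) (psi : R -> R -> 'rV[R]_b)
  (S : {set 'I_(nE m)}) (x : m.-tuple R) (i : Sidx b S) : R := fvec psi x (val i).

Definition mutually_independent (d : measure_display) (Omega : measurableType d)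
  (R : realType) (Pr : probability Omega R) (I : finType)
  (d' : measure_display) (T : measurableType d') (X : I -> Omega -> T) : Prop :=
  forall A : I -> set T, (forall i, measurable (A i)) ->
    fine (Pr (\bigcap_(i in [set: I]) (X i @^-1` A i))) =
    \prod_(i : I) fine (Pr (X i @^-1` A i)).

Definition joint_sample (T Omega : Type) (np nq : nat)
  (xp : 'I_np -> Omega -> T) (xq : 'I_nq -> Omega -> T)
  (s : 'I_np + 'I_nq) : Omega -> T :=
  match s with inl i => xp i | inr j => xq j end.

From HB Require Import structures.
From mathcomp Require Import all_boot all_order all_algebra.
From mathcomp Require Import all_classical all_reals all_analysis.
From mathcomp Require Import complex spectral sesquilinear ring lra.
Set Implicit Arguments. Unset Strict Implicit. Unset Printing Implicit Defensive.
Import Order.TTheory GRing.Theory Num.Theory.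
Import numFieldNormedType.Exports.
Local Open Scope classical_set_scope.
Local Open Scope ring_scope.

(* The Hessian of the empirical loss at [th] is the covariance of the features of
   the Q-sample under the softmax weights [pi k ~ exp (th^T f (x_q k))], and (A7)
   says precisely that [pi k = rhat (x_q k) / n_q >= 1 / (C_ratio n_q)].  A variance
   under weights bounded below by [a] dominates [a] times the sum of squared
   deviations from the unweighted mean, so every quadratic form of the Hessian
   restricted to S dominates [C_ratio^-1] times the corresponding quadratic form of
   the sample covariance, hence [C_ratio^-1 D_min2 |v|^2] on the event of (A8).
   Since [C_ratio^-1 <= rhat <= C_ratio] forces [C_ratio >= 1], this is stronger
   than the claimed bound. *)

Section RealDerivatives.
Variable R : realType.
Implicit Types (x c d dg : R) (g : R -> R).

Lemma derive_alongE (V : normedModType R) (f : V -> R) (a v : V) :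
  'D_v f a = 'D_1 (fun h : R => f (h *: v + a)) 0.
Proof.
rewrite /derive scale0r add0r.
suff -> : (fun h : R => h^-1 *: ((f \o shift a) (h *: v) - f a)) =
    (fun h : R => h^-1 *: (((fun h => f (h *: v + a)) \o shift 0) (h *: 1) - f a)) by [].
by apply/funext => h /=; rewrite /shift /= addr0 [h *: 1]mulr1.
Qed.

Lemma is_derive_affine x c d : is_derive x 1 (fun h => h * c + d) c.
Proof.
have -> : (fun h => h * c + d) = c *: id + cst d by apply/funext => h /=; rewrite mulrC.
by apply: is_derive_eq; rewrite scaler1 addr0.
Qed.

Lemma is_derive_expR_affine x c d :
  is_derive x 1 (fun h => expR (h * c + d)) (expR (x * c + d) * c).
Proof. exact: (is_derive1_comp _ (is_derive_affine x c d)). Qed.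

Lemma is_derive_sumr n (f : 'I_n -> R -> R) (df : 'I_n -> R) x :
  (forall k, is_derive x 1 (f k) (df k)) ->
  is_derive x 1 (fun y => \sum_(k < n) f k y) (\sum_(k < n) df k).
Proof.
move=> fdf; suff -> : (fun y => \sum_(k < n) f k y) = \sum_(k < n) f k by exact: is_derive_sum.
by apply/funext => y; rewrite fct_sumE.
Qed.

Lemma is_derive_mulr_cst g x dg r : is_derive x 1 g dg ->
  is_derive x 1 (fun y => g y * r) (dg * r).
Proof.
move=> gdg; have -> : (fun y => g y * r) = r *: g by apply/funext => y /=; rewrite mulrC.
by apply: is_derive_eq; rewrite mulrC.
Qed.

Lemma is_derive_ln_comp g x dg : is_derive x 1 g dg -> 0 < g x ->
  is_derive x 1 (fun y => ln (g y)) (dg / g x).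
Proof.
move=> gdg gx_gt0; rewrite mulrC.
exact: (is_derive1_comp (is_derive1_ln gx_gt0) gdg).
Qed.

End RealDerivatives.

Section Softmax.
Variables (R : realType) (n : nat).
Implicit Types (s a c d : 'I_n -> R).

Definition softmax s (k : 'I_n) : R := expR (s k) / \sum_(j < n) expR (s j).

Hypothesis n_gt0 : (0 < n)%N.

Lemma sum_expR_gt0 s : 0 < \sum_(k < n) expR (s k).
Proof.
rewrite (bigD1 (Ordinal n_gt0)) //=; apply: ltr_pwDl; first exact: expR_gt0.
by apply: sumr_ge0 => k _; exact: expR_ge0.
Qed.

Lemma softmax_sum1 s : \sum_(k < n) softmax s k = 1.
Proof. by rewrite -mulr_suml divff // gt_eqF // sum_expR_gt0. Qed.

Lemma softmax_meanE s a :
  \sum_(k < n) softmax s k * a k =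
  (\sum_(k < n) a k * expR (s k)) / \sum_(k < n) expR (s k).
Proof.
by rewrite mulr_suml; apply: eq_bigr => k _; rewrite /softmax mulrAC [expR _ * _]mulrC.
Qed.

Lemma is_derive_sum_expR_affine c d :
  is_derive (0 : R) 1 (fun h => \sum_(k < n) expR (h * c k + d k))
    (\sum_(k < n) expR (d k) * c k).
Proof.
have dE k : is_derive (0 : R) 1 (fun h => expR (h * c k + d k))
    (expR (0 * c k + d k) * c k) := is_derive_expR_affine 0 (c k) (d k).
apply: is_derive_eq; first exact: is_derive_sumr dE.
by apply: eq_bigr => k _; rewrite mul0r add0r.
Qed.

Lemma is_derive_wsum_expR_affine a c d :
  is_derive (0 : R) 1 (fun h => \sum_(k < n) a k * expR (h * c k + d k))
    (\sum_(k < n) a k * expR (d k) * c k).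
Proof.
have dE k : is_derive (0 : R) 1 (fun h => a k * expR (h * c k + d k))
    (a k * (expR (0 * c k + d k) * c k)) := is_deriveZ _ (is_derive_expR_affine 0 (c k) (d k)).
apply: is_derive_eq; first exact: is_derive_sumr dE.
by apply: eq_bigr => k _; rewrite mul0r add0r mulrA.
Qed.

Lemma is_derive_ln_mean_expR c d :
  is_derive (0 : R) 1 (fun h => ln ((\sum_(k < n) expR (h * c k + d k)) / n%:R))
    (\sum_(k < n) softmax d k * c k).
Proof.
have Zn' := is_derive_mulr_cst n%:R^-1 (is_derive_sum_expR_affine c d).
apply: is_derive_eq.
  by apply: (is_derive_ln_comp Zn'); rewrite divr_gt0 ?sum_expR_gt0 ?ltr0n.
have -> : \sum_(k < n) expR (0 * c k + d k) = \sum_(k < n) expR (d k).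
  by apply: eq_bigr => k _; rewrite mul0r add0r.
rewrite softmax_meanE invf_div mulrA divfK ?pnatr_eq0 -?lt0n //.
by congr (_ / _); apply: eq_bigr => k _; rewrite mulrC.
Qed.

Lemma is_derive_softmax_mean a c d :
  is_derive (0 : R) 1 (fun h => \sum_(k < n) softmax (fun k => h * c k + d k) k * a k)
    (\sum_(k < n) softmax d k * (a k * c k) -
     (\sum_(k < n) softmax d k * a k) * (\sum_(k < n) softmax d k * c k)).
Proof.
have -> : (fun h => \sum_(k < n) softmax (fun k => h * c k + d k) k * a k) =
    (fun h => (\sum_(k < n) a k * expR (h * c k + d k)) *
              (\sum_(k < n) expR (h * c k + d k))^-1).
  by apply/funext => h; rewrite softmax_meanE.
have Z_neq0 : \sum_(k < n) expR (0 * c k + d k) != 0 by rewrite gt_eqF ?sum_expR_gt0.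
apply: is_derive_eq; first exact: is_deriveM (is_derive_wsum_expR_affine a c d)
  (is_deriveV Z_neq0 (is_derive_sum_expR_affine c d)).
have affine0 k : 0 * c k + d k = d k by rewrite mul0r add0r.
rewrite (eq_bigr _ (fun k _ => congr1 (fun t => a k * expR t) (affine0 k))).
rewrite (eq_bigr _ (fun k _ => congr1 expR (affine0 k))) !softmax_meanE.
have -> : \sum_(k < n) expR (d k) * c k = \sum_(k < n) c k * expR (d k).
  by apply: eq_bigr => k _; rewrite mulrC.
have -> : \sum_(k < n) a k * expR (d k) * c k = \sum_(k < n) a k * c k * expR (d k).
  by apply: eq_bigr => k _; rewrite mulrAC.
have := sum_expR_gt0 d.
set Z := \sum_(k < n) expR (d k); set A := \sum_(k < n) a k * _.
set C := \sum_(k < n) c k * _; set AC := \sum_(k < n) _ * expR (d k).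
move=> Z_gt0; rewrite /GRing.scale /=; field; exact: lt0r_neq0.
Qed.
End Softmax.

Definition wcov (R : ringType) (I : finType) (n : nat) (w : 'I_n -> R)
    (g : 'I_n -> I -> R) (i j : I) : R :=
  \sum_(k < n) w k * (g k i * g k j) -
  (\sum_(k < n) w k * g k i) * (\sum_(k < n) w k * g k j).

Definition wvar (R : ringType) (n : nat) (w G : 'I_n -> R) : R :=
  \sum_(k < n) w k * G k ^+ 2 - (\sum_(k < n) w k * G k) ^+ 2.

Section DotProduct.
Variables (R : realType) (p q : nat).
Implicit Types A B v : 'M[R]_(p, q).

Lemma dotp_affine (h : R) v A B : dotp (h *: v + A) B = h * dotp v B + dotp A B.
Proof.
rewrite /dotp mulr_sumr -big_split /=; apply: eq_bigr => t _.
rewrite mulr_sumr -big_split /=; apply: eq_bigr => c _.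
by rewrite !mxE mulrDl mulrA.
Qed.

Lemma dotp_delta (i : 'I_p) (j : 'I_q) B : dotp (delta_mx i j) B = B i j.
Proof.
rewrite /dotp (bigD1 i) //= [X in _ + X]big1 ?addr0 => [|t ti]; last first.
  by apply: big1 => c _; rewrite mxE (negbTE ti) mul0r.
rewrite (bigD1 j) //= big1 ?addr0 => [|c cj]; first by rewrite mxE !eqxx mul1r.
by rewrite mxE eqxx (negbTE cj) /= mul0r.
Qed.

End DotProduct.

Section EmpiricalLoss.
Variables (R : realType) (p q n np : nat).
Variables (F : 'I_n -> 'M[R]_(p, q)) (G : 'I_np -> 'M[R]_(p, q)).
Implicit Types th : 'M[R]_(p, q).

Definition empirical_loss th : R :=
  - ((\sum_(k < np) dotp th (G k)) / np%:R) +
  ln ((\sum_(k < n) expR (dotp th (F k))) / n%:R).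

Definition empirical_loss_grad (i : 'I_p) (j : 'I_q) th : R :=
  - ((\sum_(k < np) G k i j) / np%:R) +
  \sum_(k < n) softmax (fun k => dotp th (F k)) k * F k i j.

Hypothesis n_gt0 : (0 < n)%N.

Lemma derive_empirical_loss i j th :
  'D_(delta_mx i j) empirical_loss th = empirical_loss_grad i j th.
Proof.
rewrite derive_alongE; apply: derive_val.
have -> : (fun h => empirical_loss (h *: delta_mx i j + th)) =
    (fun h => h * - ((\sum_(k < np) G k i j) / np%:R) +
              - ((\sum_(k < np) dotp th (G k)) / np%:R) +
              ln ((\sum_(k < n) expR (h * F k i j + dotp th (F k))) / n%:R)).
  apply/funext => h; rewrite /empirical_loss.
  have lin B : dotp (h *: delta_mx i j + th) B = h * B i j + dotp th B.
    by rewrite dotp_affine dotp_delta.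
  rewrite (eq_bigr _ (fun k _ => lin (G k))).
  rewrite (eq_bigr _ (fun k _ => congr1 expR (lin (F k)))).
  by rewrite big_split /= -mulr_sumr; ring.
exact: is_deriveD (is_derive_affine _ _ _) (is_derive_ln_mean_expR n_gt0 _ _).
Qed.

Lemma derive_empirical_loss_grad i j i' j' th :
  'D_(delta_mx i' j') (empirical_loss_grad i j) th =
  wcov (softmax (fun k => dotp th (F k))) (fun k (ij : 'I_p * 'I_q) => F k ij.1 ij.2)
    (i, j) (i', j').
Proof.
rewrite derive_alongE; apply: derive_val.
have -> : (fun h => empirical_loss_grad i j (h *: delta_mx i' j' + th)) =
    (fun h => - ((\sum_(k < np) G k i j) / np%:R) +
      \sum_(k < n) softmax (fun k => h * F k i' j' + dotp th (F k)) k * F k i j).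
  apply/funext => h; rewrite /empirical_loss_grad.
  suff -> : (fun k => dotp (h *: delta_mx i' j' + th) (F k)) =
            (fun k => h * F k i' j' + dotp th (F k)) by [].
  by apply/funext => k; rewrite dotp_affine dotp_delta.
apply: is_derive_eq.
  exact: is_deriveD (is_derive_cst _ _ _) (is_derive_softmax_mean n_gt0 _ _ _).
by rewrite add0r.
Qed.

Lemma hessian_empirical_loss th (i j : 'I_p * 'I_q) :
  hessian empirical_loss th i j =
  wcov (softmax (fun k => dotp th (F k))) (fun k (ij : 'I_p * 'I_q) => F k ij.1 ij.2) i j.
Proof.
rewrite /hessian.
have -> : 'D_(delta_mx i.1 i.2) empirical_loss = empirical_loss_grad i.1 i.2.
  by apply/funext => th'; exact: derive_empirical_loss.
by rewrite derive_empirical_loss_grad -!surjective_pairing.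
Qed.

End EmpiricalLoss.

Section WeightedVariance.
Variables (R : realFieldType) (n : nat).
Implicit Types (w G : 'I_n -> R).

Lemma sum_sqr_dev_mean_le G (c : R) :
  \sum_(k < n) (G k - (\sum_(j < n) G j) / n%:R) ^+ 2 <= \sum_(k < n) (G k - c) ^+ 2.
Proof.
case: n G => [|n'] G; first by rewrite !big_ord0.
set m := (\sum_(j < n'.+1) G j) / n'.+1%:R.
have sumG : \sum_(j < n'.+1) G j = n'.+1%:R * m by rewrite /m mulrC divfK.
suff -> : \sum_(k < n'.+1) (G k - c) ^+ 2 =
    \sum_(k < n'.+1) (G k - m) ^+ 2 + n'.+1%:R * (m - c) ^+ 2.
  by rewrite lerDl mulr_ge0 ?sqr_ge0.
have shift k : (G k - c) ^+ 2 = (G k - m) ^+ 2 + 2 * (m - c) * G k + (c ^+ 2 - m ^+ 2).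
  by ring.
rewrite (eq_bigr _ (fun k _ => shift k)) big_split big_split /= -mulr_sumr sumG.
by rewrite sumr_const card_ord -[_ *+ n'.+1]mulr_natl; ring.
Qed.

Lemma wvar_centered w G : \sum_(k < n) w k = 1 ->
  wvar w G = \sum_(k < n) w k * (G k - \sum_(j < n) w j * G j) ^+ 2.
Proof.
move=> w_sum1; rewrite /wvar; set mu := \sum_(j < n) w j * G j.
have expand k : w k * (G k - mu) ^+ 2 =
    w k * G k ^+ 2 - (2 * mu) * (w k * G k) + mu ^+ 2 * w k by ring.
rewrite (eq_bigr _ (fun k _ => expand k)) big_split sumrB /= -!mulr_sumr w_sum1 -/mu.
by ring.
Qed.

Lemma wvar_ge w G (a : R) : 0 <= a -> \sum_(k < n) w k = 1 -> (forall k, a <= w k) ->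
  a * \sum_(k < n) (G k - (\sum_(j < n) G j) / n%:R) ^+ 2 <= wvar w G.
Proof.
move=> a_ge0 w_sum1 a_le_w; rewrite wvar_centered //.
apply: le_trans (ler_wpM2l a_ge0 (sum_sqr_dev_mean_le G _)) _.
by rewrite mulr_sumr; apply: ler_sum => k _; apply: ler_wpM2r; rewrite ?sqr_ge0.
Qed.

End WeightedVariance.

Section QuadraticForms.
Variables (R : realType) (I : finType) (v : 'rV[R]_#|I|).
Local Notation u x := (v 0 (enum_rank x)).
Local Notation proj g k := (\sum_(x : I) u x * g k x).

Lemma quad_mxOf (M : I -> I -> R) :
  (v *m mxOf M *m v^T) 0 0 = \sum_(x : I) \sum_(y : I) u x * u y * M x y.
Proof.
have sum_enum (f : I -> R) : \sum_(j < #|I|) f (enum_val j) = \sum_(x : I) f x.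
  by rewrite [RHS](reindex (@enum_val I I)) //; apply: onW_bij; exact: enum_val_bij.
rewrite [RHS]exchange_big /= mxE -sum_enum; apply: eq_bigr => j _.
rewrite !mxE mulr_suml -sum_enum; apply: eq_bigr => i _.
by rewrite !mxE !enum_valK mulrAC mulrC mulrA.
Qed.

Lemma sum_bilinear (a b : I -> R) :
  \sum_(x : I) \sum_(y : I) u x * u y * (a x * b y) =
  (\sum_(x : I) u x * a x) * (\sum_(y : I) u y * b y).
Proof.
rewrite mulr_suml; apply: eq_bigr => x _; rewrite mulr_sumr; apply: eq_bigr => y _.
by rewrite mulrACA.
Qed.

Lemma proj_sum n (c : 'I_n -> R) (g : 'I_n -> I -> R) :
  \sum_(x : I) u x * \sum_(k < n) c k * g k x = \sum_(k < n) c k * proj g k.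
Proof.
under eq_bigr do rewrite mulr_sumr.
rewrite exchange_big /=; apply: eq_bigr => k _.
by rewrite mulr_sumr; apply: eq_bigr => x _; rewrite mulrCA.
Qed.

Lemma sum_quad_outer n (c : 'I_n -> R) (a : 'I_n -> I -> R) :
  \sum_(x : I) \sum_(y : I) u x * u y * \sum_(k < n) c k * (a k x * a k y) =
  \sum_(k < n) c k * proj a k ^+ 2.
Proof.
under eq_bigr => x _ do under eq_bigr => y _ do rewrite mulr_sumr.
under eq_bigr => x _ do rewrite exchange_big.
rewrite exchange_big; apply: eq_bigr => k _ /=.
rewrite expr2 -sum_bilinear mulr_sumr; apply: eq_bigr => x _.
by rewrite mulr_sumr; apply: eq_bigr => y _; rewrite mulrCA.
Qed.

Lemma quad_mxOf_wcov n (w : 'I_n -> R) (g : 'I_n -> I -> R) :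
  (v *m mxOf (wcov w g) *m v^T) 0 0 = wvar w (fun k => proj g k).
Proof.
rewrite quad_mxOf /wcov /wvar.
under eq_bigr => x _ do under eq_bigr => y _ do rewrite mulrBr.
under eq_bigr => x _ do rewrite sumrB.
by rewrite sumrB sum_bilinear !proj_sum -expr2 sum_quad_outer.
Qed.

Lemma quad_mxOf_scov n (g : 'I_n -> I -> R) :
  (v *m mxOf (scov g) *m v^T) 0 0 =
  n%:R^-1 * \sum_(k < n) (proj g k - (\sum_(j < n) proj g j) / n%:R) ^+ 2.
Proof.
rewrite quad_mxOf.
have scovE x y : scov g x y =
    \sum_(k < n) n%:R^-1 * ((g k x - smean g x) * (g k y - smean g y)).
  by rewrite /scov mulr_suml; apply: eq_bigr => k _; rewrite mulrC.
under eq_bigr => x _ do under eq_bigr => y _ do rewrite scovE.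
rewrite sum_quad_outer -mulr_sumr; congr (_ * _); apply: eq_bigr => k _.
rewrite /smean; under eq_bigr do rewrite mulrBr.
rewrite sumrB; congr ((_ - _) ^+ 2).
under eq_bigr do rewrite mulrA.
rewrite -mulr_suml; congr (_ / _).
by under eq_bigr do rewrite mulr_sumr; exact: exchange_big.
Qed.

End QuadraticForms.

Lemma quad_eigenvector (R : comRingType) n (A : 'M[R]_n) (v : 'rV[R]_n) a :
  v *m A = a *: v -> (v *m A *m v^T) 0 0 = a * (v *m v^T) 0 0.
Proof. by move=> vA; rewrite vA -scalemxAl mxE. Qed.

Lemma sqr_rV_gt0 (R : realDomainType) n (v : 'rV[R]_n) : v != 0 -> 0 < (v *m v^T) 0 0.
Proof.
move=> v_neq0; have [j vj_neq0] : exists j, v 0 j != 0.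
  apply/existsP; apply: contraR v_neq0 => /existsPn v0; apply/eqP/rowP => j.
  by rewrite mxE; apply/eqP; rewrite -[_ == _]negbK v0.
rewrite mxE (bigD1 j) //= mxE ltr_pwDl ?lt_def ?sqrf_eq0 -?expr2 ?vj_neq0 ?sqr_ge0 //.
by apply: sumr_ge0 => k _; rewrite mxE -expr2 sqr_ge0.
Qed.

(* The spectral theorem is available only over an algebraically closed field, so
   [A] is diagonalized as a Hermitian matrix over [R[i]], whose eigenvalues are real. *)
Section RealSymmetricSpectrum.
Local Open Scope sesquilinear_scope.
Local Open Scope complex_scope.
Variables (R : realType) (n : nat) (A : 'M[R]_n).
Hypothesis A_sym : A^T = A.

Local Notation toC := (real_complex R).
Let Ac : 'M[R[i]]_n := map_mx toC A.
Let U := spectralmx Ac.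
Let ev (i : 'I_n) : R := complex.Re (spectral_diag Ac 0 i).

Lemma conj_real_complex (x : R) : Num.conj (x%:C : R[i]) = x%:C.
Proof. by apply/conj_Creal/complex_realP; exists x. Qed.

Let Ac_hermitian : Ac \is hermsymmx.
Proof.
apply/is_hermitianmxP; rewrite expr0 scale1r; apply/matrixP => i j.
by rewrite !mxE conj_real_complex -{1}A_sym mxE.
Qed.

Let Ac_spectral : Ac = U ^t* *m diag_mx (spectral_diag Ac) *m U.
Proof.
rewrite -invmx_unitary; last exact: spectral_unitarymx.
exact/orthomx_spectralP/hermitian_normalmx/Ac_hermitian.
Qed.

Let UUt : U *m U ^t* = 1%:M.
Proof. exact/unitarymxP/spectral_unitarymx. Qed.

Let UtU : U ^t* *m U = 1%:M.
Proof. by rewrite -invmx_unitary ?mulVmx ?spectral_unit ?spectral_unitarymx. Qed.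

Let spectral_diagE i : spectral_diag Ac 0 i = (ev i)%:C.
Proof.
have /mxOverP Dreal := hermitian_spectral_diag_real Ac_hermitian.
by rewrite /ev RRe_real //; exact: Dreal.
Qed.

Let map_rV_adj (v : 'rV[R]_n) : (map_mx toC v) ^t* = map_mx toC v^T.
Proof. by apply/matrixP => i j; rewrite !mxE conj_real_complex. Qed.

Let quad_spectral (v : 'rV[R]_n) (w := map_mx toC v *m U ^t*) :
  ((v *m A *m v^T) 0 0)%:C = \sum_i (ev i)%:C * (w 0 i * Num.conj (w 0 i)).
Proof.
have -> : ((v *m A *m v^T) 0 0)%:C = (map_mx toC v *m Ac *m (map_mx toC v) ^t*) 0 0.
  by rewrite map_rV_adj -!map_mxM [in RHS]mxE.
have diag_quad (x : 'rV_n) : (x *m diag_mx (spectral_diag Ac) *m x ^t*) 0 0 =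
    \sum_i (ev i)%:C * (x 0 i * Num.conj (x 0 i)).
  rewrite mul_mx_diag mxE; apply: eq_bigr => i _.
  by rewrite [in LHS]mxE spectral_diagE !mxE mulrCA mulrA.
suff -> : map_mx toC v *m Ac *m (map_mx toC v) ^t* =
    w *m diag_mx (spectral_diag Ac) *m w ^t* by exact: diag_quad.
(* [Ac] also occurs inside [spectral_diag Ac]: only the first occurrence is unfolded. *)
by rewrite /w trmx_mul map_mxM trmxCK {1}Ac_spectral !mulmxA.
Qed.

Let sqr_spectral (v : 'rV[R]_n) (w := map_mx toC v *m U ^t*) :
  ((v *m v^T) 0 0)%:C = \sum_i w 0 i * Num.conj (w 0 i).
Proof.
have -> : ((v *m v^T) 0 0)%:C = (map_mx toC v *m (map_mx toC v) ^t*) 0 0.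
  by rewrite map_rV_adj -map_mxM [in RHS]mxE.
suff -> : map_mx toC v *m (map_mx toC v) ^t* = w *m w ^t*.
  by rewrite mxE; apply: eq_bigr => i _; rewrite !mxE.
by rewrite /w trmx_mul map_mxM trmxCK mulmxA -(mulmxA _ _ U) UtU mulmx1.
Qed.

Let quad_ge_of_ev_ge (L : R) : (forall i, L <= ev i) ->
  forall v : 'rV[R]_n, L * (v *m v^T) 0 0 <= (v *m A *m v^T) 0 0.
Proof.
move=> L_le v; rewrite -subr_ge0 -ler0c rmorphB rmorphM /= quad_spectral sqr_spectral.
rewrite mulr_sumr -sumrB; apply: sumr_ge0 => i _.
rewrite -mulrBl; apply: mulr_ge0; last exact: mul_conjC_ge0.
by rewrite -rmorphB ler0c subr_ge0.
Qed.

Let eigenvalue_ev i : eigenvalue A (ev i).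
Proof.
have : eigenvalue Ac (spectral_diag Ac 0 i).
  apply/eigenvalueP; exists (row i U).
    rewrite -row_mul {1}Ac_spectral !mulmxA UUt mul1mx mul_diag_mx.
    by apply/rowP => j; rewrite !mxE.
  apply/negP => /eqP rowU0.
  have : row i (U *m U ^t*) = 0 by rewrite row_mul rowU0 mul0mx.
  by rewrite UUt => /rowP /(_ i); rewrite !mxE eqxx /= => /eqP; rewrite oner_eq0.
by rewrite spectral_diagE !eigenvalue_root_char /Ac -map_char_poly fmorph_root.
Qed.

(* Any lower bound will do: it only makes the infimum defining [lambda_min] meaningful. *)
Let eigenvalue_ge a : eigenvalue A a -> - (\sum_i `|ev i|) <= a.
Proof.
move=> /eigenvalueP [v vA v_neq0].
rewrite -(ler_pM2r (sqr_rV_gt0 v_neq0)) -(quad_eigenvector vA).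
apply: quad_ge_of_ev_ge => i; rewrite lerNl (le_trans (ler_norm _)) // normrN.
by rewrite (bigD1 i) //= lerDl sumr_ge0.
Qed.

Lemma lambda_min_quad_le (v : 'rV[R]_n) :
  lambda_min A * (v *m v^T) 0 0 <= (v *m A *m v^T) 0 0.
Proof.
apply: quad_ge_of_ev_ge => i; apply: ge_inf (eigenvalue_ev i).
by exists (- (\sum_i `|ev i|)) => a /eigenvalue_ge.
Qed.

Lemma symmetric_eigenvalue_exists : (0 < n)%N -> exists a, eigenvalue A a.
Proof. by move=> n_gt0; exists (ev (Ordinal n_gt0)). Qed.

End RealSymmetricSpectrum.

Lemma lambda_min_neq0_size (R : realType) n (A : 'M[R]_n) :
  lambda_min A != 0 -> (0 < n)%N.
Proof.
case: n A => // A; apply: contraNT => _; rewrite /lambda_min.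
suff -> : [set a : R | eigenvalue A a] = set0 by rewrite inf0.
by apply/seteqP; split => // a /= /eigenvalueP [v _]; rewrite (thinmx0 v) eqxx.
Qed.

Lemma lambda_min_ge (R : realType) n (A : 'M[R]_n) (c : R) : A^T = A -> (0 < n)%N ->
  (forall v : 'rV[R]_n, c * (v *m v^T) 0 0 <= (v *m A *m v^T) 0 0) ->
  c <= lambda_min A.
Proof.
move=> A_sym n_gt0 c_le; apply: lb_le_inf.
  by have [a Aa] := symmetric_eigenvalue_exists A_sym n_gt0; exists a.
move=> a /= /eigenvalueP [v vA v_neq0].
by rewrite -(ler_pM2r (sqr_rV_gt0 v_neq0)) -(quad_eigenvector vA).
Qed.

Lemma tr_mxOf (R : realType) (I : finType) (M : I -> I -> R) :
  (forall x y, M x y = M y x) -> (mxOf M)^T = mxOf M.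
Proof. by move=> M_sym; apply/matrixP => i j; rewrite !mxE M_sym. Qed.

Lemma wcovC (R : comRingType) (I : finType) n (w : 'I_n -> R) (g : 'I_n -> I -> R) x y :
  wcov w g x y = wcov w g y x.
Proof.
rewrite /wcov mulrC; congr (_ - _).
by apply: eq_bigr => k _; rewrite (mulrC (g k x)).
Qed.

Lemma scovC (R : realType) (I : finType) n (g : 'I_n -> I -> R) x y :
  scov g x y = scov g y x.
Proof. by rewrite /scov; congr (_ / _); apply: eq_bigr => k _; rewrite mulrC. Qed.

Lemma lambda_min_wcov_ge (R : realType) (I : finType) n (w : 'I_n -> R)
    (g : 'I_n -> I -> R) (a : R) :
  (0 < #|I|)%N -> 0 <= a -> \sum_(k < n) w k = 1 -> (forall k, a / n%:R <= w k) ->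
  a * lambda_min (mxOf (scov g)) <= lambda_min (mxOf (wcov w g)).
Proof.
move=> I_gt0 a_ge0 w_sum1 w_ge; apply: lambda_min_ge (tr_mxOf (wcovC w g)) I_gt0 _ => v.
rewrite quad_mxOf_wcov -mulrA.
apply: le_trans (ler_wpM2l a_ge0 (lambda_min_quad_le (tr_mxOf (scovC g)) v)) _.
by rewrite quad_mxOf_scov mulrA; apply: wvar_ge => //; rewrite divr_ge0.
Qed.

Lemma rhat_sample (R : realType) m b nq (psi : R -> R -> 'rV[R]_b)
    (xs : 'I_nq -> m.-tuple R) (th : par R m b) (k : 'I_nq) :
  rhat psi xs th (xs k) = nq%:R * softmax (fun j => dotp th (feat psi (xs j))) k.
Proof. by rewrite /rhat /Nhat /softmax invf_div mulrCA. Qed.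

Lemma ge1_of_invr_le_le (R : realFieldType) (c x : R) :
  0 < x -> c^-1 <= x -> x <= c -> 1 <= c.
Proof.
move=> x_gt0 cVx xc; have c_gt0 := lt_le_trans x_gt0 xc.
have := ler_wpM2r (ltW c_gt0) (le_trans cVx xc).
by rewrite mulVf ?gt_eqF // => ?; nra.
Qed.

Theorem proposition7
  (R : realType) (m b : nat) (psi : R -> R -> 'rV[R]_b)
  (d : measure_display) (Omega : measurableType d) (Pr : probability Omega R)
  (P Q : probability (m.-tuple R) R)
  (np nq : nat) (xp : 'I_np -> Omega -> m.-tuple R) (xq : 'I_nq -> Omega -> m.-tuple R)
  (theta_star : par R m b)
  (Cmin Cmax Cratio : R) (Cf : 'I_(nE m) -> R)
  (Dmax1 Dmax2 Dmin2 delta_nq : R) :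
  (0 < np)%N -> (0 < nq)%N ->
  (forall i, measurable_fun setT (xp i)) ->
  (forall i, measurable_fun setT (xq i)) ->
  (forall i A, measurable A -> Pr (xp i @^-1` A) = P A) ->
  (forall i A, measurable A -> Pr (xq i @^-1` A) = Q A) ->
  mutually_independent Pr (joint_sample xp xq) ->
  (forall A, measurable A ->
     P A = (\int[Q]_(x in A) (rpop psi Q theta_star x)%:E)%E) ->
  (forall delta : par R m b, enorm delta <= enorm theta_star ->
     (forall x, 0 < Cmin /\ Cmin <= rpop psi Q (theta_star + delta) x
                /\ rpop psi Q (theta_star + delta) x <= Cmax) /\
     (forall (w : Omega) x,
        Cratio^-1 <= rhat psi (xq ^~ w) (theta_star + delta) x /\
        rhat psi (xq ^~ w) (theta_star + delta) x <= Cratio)) ->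
  (forall t x, enorm (row t (feat psi x)) <= Cf t) ->
  {ae Pr, forall w,
     (forall t : 'I_(nE m),
        (\sum_(i < nq) enorm (row t (feat psi (xq i w)))) / nq%:R <= Dmax1) /\
     specnorm (mxOf (smom2 (fun i => fvec psi (xq i w)))) <= Dmax2 /\
     specnorm (mxOf (scov (fun i => fvec psi (xq i w)))) <= Dmax2} ->
  0 < Dmin2 ->
  (exists E : set Omega, measurable E /\ ((1 - delta_nq)%:E <= Pr E)%E /\
     forall w, E w ->
       Dmin2 <= lambda_min
         (mxOf (scov (fun i => fvecS psi (S := supp theta_star) (xq i w))))) ->
  forall delta : par R m b, enorm delta <= enorm theta_star ->
  exists E : set Omega, measurable E /\ ((1 - delta_nq)%:E <= Pr E)%E /\
    forall w, E w ->
      Dmin2 / Cratio ^+ 2 <= lambda_min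
        (mxOf (fun i j : Sidx b (supp theta_star) =>
           hessian (loss psi (xp ^~ w) (xq ^~ w)) (theta_star + delta)
                   (val i) (val j))).
Proof.
move=> _ nq_gt0 _ _ _ _ _ _ A7 _ _ Dmin2_gt0 [E [mE [PE Dmin2_le]]] delta delta_le.
exists E; split=> //; split=> // w Ew; have {}Dmin2_le := Dmin2_le w Ew.
have [_ /(_ w) rhat_bounds] := A7 delta delta_le.
set S := supp theta_star in Dmin2_le *; set th := theta_star + delta in rhat_bounds *.
pose F k := feat psi (xq k w); pose pi := softmax (fun k => dotp th (F k)).
have pi_ge k : Cratio^-1 / nq%:R <= pi k.
  have [lo _] := rhat_bounds (xq k w); rewrite rhat_sample in lo.
  by rewrite ler_pdivrMr ?ltr0n // mulrC.
have C_ge1 : 1 <= Cratio.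
  have [lo hi] := rhat_bounds (xq (Ordinal nq_gt0) w).
  apply: ge1_of_invr_le_le lo hi.
  by rewrite rhat_sample mulr_gt0 ?ltr0n ?divr_gt0 ?expR_gt0 ?sum_expR_gt0.
have C_gt0 := lt_le_trans ltr01 C_ge1.
have -> : mxOf (fun i j : Sidx b S =>
    hessian (loss psi (xp ^~ w) (xq ^~ w)) th (val i) (val j)) =
    mxOf (wcov pi (fun k => fvecS psi (S := S) (xq k w))).
  apply/matrixP => i j; rewrite !mxE.
  exact: (@hessian_empirical_loss _ _ _ _ _ F (fun k => feat psi (xp k w)) nq_gt0).
have dim_gt0 := lambda_min_neq0_size (lt0r_neq0 (lt_le_trans Dmin2_gt0 Dmin2_le)).
have CV_ge0 : 0 <= Cratio^-1 by rewrite invr_ge0 ltW.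
apply: le_trans _ (lambda_min_wcov_ge _ dim_gt0 CV_ge0 (softmax_sum1 nq_gt0 _) pi_ge).
rewrite expr2 invfM mulrCA ler_pM2l ?invr_gt0 //.
apply: le_trans _ Dmin2_le; rewrite ler_pdivrMr //.
exact: ler_peMr (ltW Dmin2_gt0) C_ge1.
Qed.
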